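(* Let $A$ be a superring and $S\subseteq A$ a Marshall coherent subset with $0\notin S$. Then: (i) if $A$ is full, $A/_mS$ is full; (ii) if $A$ is a superdomain, $A/_mS$ is a superdomain; (iii) if $A$ is a superfield, $A/_mS$ is a superfield.
   Context: Multivalued operations are extended to subsets by unions. A superring is a structure $(S,+,\cdot,-,0,1)$ with multivalued addition and multiplication such that $(S,+,-,0)$ is a commutative multigroup, $(S,\cdot,1)$ is a commutative multimonoid, $a\cdot0=\{0\}$, $c(a+b)\subseteq ca+cb$, and $-(ab)=(-a)b=a(-b)$ (multigroup axioms: $c\in ab\Rightarrow a\in c\,r(b)$ and $b\in r(a)c$; $b\in a\cdot1\iff a=b$; $(ab)c\subseteq a(bc)$; $ab=ba$; multimonoid: the last two and $a\in 1\cdot a$). It is full if $c(a+b)=ca+cb$ for all $a,b,c$. A superdomain is a nontrivial superring in which $0\in ab$ iff $a=0$ or $b=0$; a superfield is a superdomain in which every $a\ne0$ has some $b$ with $1\in ab$. A subset $S$ of a superring $A$ is Marshall coherent if it is multiplicative ($1\in S$, $S\cdot S\subseteq S$) and whenever $x,a\in A$ and $x\in as$ for some $s\in S$, there are $P,Q\subseteq S$ with $xP=aQ$. For $a,b\in A$, $a\sim_S b$ iff there are nonempty $X,Y\subseteq S$ with $aX=bY$. The Marshall quotient $A/_mS$ is the set of $\sim_S$-classes $[a]$ with: $[c]\in[a]+[b]$ iff there exist $c'\sim c$, $a'\sim a$, $b'\sim b$ with $c'\in a'+b'$; $[c]\in[a][b]$ iff there exist $c'\sim c,a'\sim a,b'\sim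 b$ with $c'\in a'b'$; $-[a]:=[-a]$; zero $[0]$, unit $[1]$. *)

From Stdlib Require Import ClassicalEpsilon.

Set Implicit Arguments.

(* Operations of a structure (S,+,.,-,0,1) with multivalued + and . .
   Convention: [sadd a b c] means  c \in a + b,  [smul a b c] means c \in a b. *)
Record SROps (T : Type) := MkSROps {
  sadd  : T -> T -> T -> Prop;
  smul  : T -> T -> T -> Prop;
  sneg  : T -> T;
  szero : T;
  sone  : T }.

Section SRDefs.
Variables (T : Type) (R : SROps T).
Local Notation add := (sadd R).
Local Notation mul := (smul R).
Local Notation neg := (sneg R).
Local Notation z := (szero R).
Local Notation o := (sone R).

Definition comm_multigroup : Prop :=
  (forall a b c, add a b c -> add c (neg b) a /\ add (neg a) c b) /\
  (forall a b, add a z b <-> a = b) /\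
  (forall a b c x, (exists y, add a b y /\ add y c x) ->
                   (exists y, add b c y /\ add a y x)) /\
  (forall a b x, add a b x <-> add b a x).

Definition comm_multimonoid : Prop :=
  (forall a b c x, (exists y, mul a b y /\ mul y c x) ->
                   (exists y, mul b c y /\ mul a y x)) /\
  (forall a b x, mul a b x <-> mul b a x) /\
  (forall a, mul o a a).

Definition superring : Prop :=
  comm_multigroup /\ comm_multimonoid /\
  (forall a x, mul a z x <-> x = z) /\
  (forall a b c x, (exists y, add a b y /\ mul c y x) ->
                   (exists u v, mul c a u /\ mul c b v /\ add u v x)) /\
  (forall a b x, (exists y, mul a b y /\ x = neg y) <-> mul (neg a) b x) /\
  (forall a b x, (exists y, mul a b y /\ x = neg y) <-> mul a (neg b) x).

Definition full_superring : Prop :=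
  superring /\
  (forall a b c x, (exists y, add a b y /\ mul c y x) <->
                   (exists u v, mul c a u /\ mul c b v /\ add u v x)).

Definition superdomain : Prop :=
  superring /\ z <> o /\
  (forall a b, mul a b z <-> (a = z \/ b = z)).

Definition superfield : Prop :=
  superdomain /\ (forall a, a <> z -> exists b, mul a b o).

Definition mul_set (x : T) (P : T -> Prop) : T -> Prop :=
  fun y => exists p, P p /\ mul x p y.

Definition set_eq (X Y : T -> Prop) : Prop := forall y, X y <-> Y y.

Definition nonempty (X : T -> Prop) : Prop := exists x, X x.

Definition subset (X Y : T -> Prop) : Prop := forall x, X x -> Y x.

Definition marshall_coherent (S : T -> Prop) : Prop :=
  S o /\
  (forall a b x, S a -> S b -> mul a b x -> S x) /\
  (forall x a s, S s -> mul a s x ->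
     exists P Q, subset P S /\ subset Q S /\ nonempty P /\ nonempty Q /\
                 set_eq (mul_set x P) (mul_set a Q)).

Definition msim (S : T -> Prop) (a b : T) : Prop :=
  exists X Y, subset X S /\ subset Y S /\ nonempty X /\ nonempty Y /\
              set_eq (mul_set a X) (mul_set b Y).

Definition mclass (S : T -> Prop) (a : T) : T -> Prop := fun b => msim S a b.

End SRDefs.

Definition mquot_carrier {T : Type} (R : SROps T) (S : T -> Prop) : Type :=
  { C : T -> Prop | exists a, C = mclass R S a }.

Definition mrep {T : Type} {R : SROps T} {S : T -> Prop}
  (X : mquot_carrier R S) : T :=
  proj1_sig (constructive_indefinite_description _ (proj2_sig X)).

Definition mcl {T : Type} (R : SROps T) (S : T -> Prop) (a : T) :
  mquot_carrier R S := exist _ (mclass R S a) (ex_intro _ a eq_refl).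

Definition mquot {T : Type} (R : SROps T) (S : T -> Prop) :
  SROps (mquot_carrier R S) :=
  MkSROps
    (fun X Y Z => exists a b c,
        proj1_sig X = mclass R S a /\ proj1_sig Y = mclass R S b /\
        proj1_sig Z = mclass R S c /\
        exists c' a' b', msim R S c' c /\ msim R S a' a /\ msim R S b' b /\
                         sadd R a' b' c')
    (fun X Y Z => exists a b c,
        proj1_sig X = mclass R S a /\ proj1_sig Y = mclass R S b /\
        proj1_sig Z = mclass R S c /\
        exists c' a' b', msim R S c' c /\ msim R S a' a /\ msim R S b' b /\
                         smul R a' b' c')
    (fun X => mcl R S (sneg R (mrep X)))
    (mcl R S (szero R))
    (mcl R S (sone R)).

(* Coherence says that an S-multiple of a lies in the class of a; conversely,
   if a ~ b then, for a suitable t in S, every multiple b t is a multiple a s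
   with s in S.  So a relation c' in a' + b' or c' in a' b' between
   representatives can be multiplied by elements of S, distributivity and
   associativity carrying the factor inside, until a prescribed representative
   appears literally; this is how each superring axiom, and fullness, passes
   from A to A/_mS.  When 0 is not in S and A is a superdomain, the class of 0
   is {0}, so zero divisors and inverses behave in the quotient as in A. *)

From Stdlib Require Import ClassicalEpsilon FunctionalExtensionality
  PropExtensionality ProofIrrelevance.

Set Implicit Arguments.
Unset Strict Implicit.

Section Superring.
Variables (T : Type) (A : SROps T).
Hypothesis HA : superring A.

Local Notation add := (sadd A).
Local Notation mul := (smul A).
Local Notation neg := (sneg A).
Local Notation z := (szero A).
Local Notation o := (sone A).

Lemma add_rev a b c : add a b c -> add c (neg b) a /\ add (neg a) c b.
Proof. destruct HA as [[H _] _]. apply H. Qed.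

Lemma add0_iff a b : add a z b <-> a = b.
Proof. destruct HA as [[_ [H _]] _]. apply H. Qed.

Lemma add_assoc a b c y x :
  add a b y -> add y c x -> exists w, add b c w /\ add a w x.
Proof. destruct HA as [[_ [_ [H _]]] _]. eauto. Qed.

Lemma add_comm a b x : add a b x <-> add b a x.
Proof. destruct HA as [[_ [_ [_ H]]] _]. apply H. Qed.

Lemma mul_assoc a b c y x :
  mul a b y -> mul y c x -> exists w, mul b c w /\ mul a w x.
Proof. destruct HA as [_ [[H _] _]]. eauto. Qed.

Lemma mul_comm a b x : mul a b x <-> mul b a x.
Proof. destruct HA as [_ [[_ [H _]] _]]. apply H. Qed.

Lemma mul1 a : mul o a a.
Proof. destruct HA as [_ [[_ [_ H]] _]]. apply H. Qed.

Lemma mul0 a x : mul a z x <-> x = z.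
Proof. destruct HA as [_ [_ [H _]]]. apply H. Qed.

Lemma mul_addr a b c y x :
  add a b y -> mul c y x -> exists u v, mul c a u /\ mul c b v /\ add u v x.
Proof. destruct HA as [_ [_ [_ [H _]]]]. eauto. Qed.

Lemma mul_negl a b x : (exists y, mul a b y /\ x = neg y) <-> mul (neg a) b x.
Proof. destruct HA as [_ [_ [_ [_ [H _]]]]]. apply H. Qed.

Lemma mul_negr a b x : (exists y, mul a b y /\ x = neg y) <-> mul a (neg b) x.
Proof. destruct HA as [_ [_ [_ [_ [_ H]]]]]. apply H. Qed.

Lemma add_opp a : add a (neg a) z.
Proof. apply add_comm, (add_rev (proj2 (add0_iff a a) eq_refl)). Qed.

Lemma negK a : neg (neg a) = a.
Proof.
  destruct (add_rev (proj2 (add0_iff a a) eq_refl)) as [_ H].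
  destruct (add_rev H) as [_ H']. apply add0_iff, H'.
Qed.

Lemma mul0l a x : mul z a x <-> x = z.
Proof. rewrite mul_comm. apply mul0. Qed.

(* Products are nonempty: a 0 = {0} and 0 is in b + (-b), so a(b + (-b))
   meets ab + a(-b). *)
Lemma mul_total a b : exists x, mul a b x.
Proof.
  destruct (mul_addr (add_opp b) (proj2 (mul0 a z) eq_refl)) as [u [_ [Hu _]]].
  exists u. exact Hu.
Qed.

Lemma mul_assoc_rev a b c y x :
  mul b c y -> mul a y x -> exists w, mul a b w /\ mul w c x.
Proof.
  intros Hy Hx. apply mul_comm in Hx.
  destruct (mul_assoc Hy Hx) as [w [Hw Hx']]. apply mul_comm in Hx'.
  destruct (mul_assoc Hw Hx') as [v [Hv Hx'']].
  exists v. split; [exact Hv | apply mul_comm, Hx''].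
Qed.

Lemma mul_AC a b c y x :
  mul a b y -> mul y c x -> exists p, mul a c p /\ mul p b x.
Proof.
  intros Hy Hx. destruct (mul_assoc Hy Hx) as [m [Hm Hx']].
  apply mul_comm in Hm. exact (mul_assoc_rev Hm Hx').
Qed.

(* Reversibility gives a in c + (-b), hence a t is contained in c t + (-b) t:
   every multiple of a summand extends to a multiple of the sum. *)
Lemma add_mul_extend a b c t p :
  add a b c -> mul a t p ->
  exists q r, mul c t q /\ mul b t r /\ add p r q.
Proof.
  intros Habc Hp. destruct (add_rev Habc) as [Hc _].
  apply mul_comm in Hp.
  destruct (mul_addr Hc Hp) as [q [r' [Hq [Hr' Hqr]]]].
  apply mul_negr in Hr'. destruct Hr' as [r [Hr ->]].
  destruct (add_rev Hqr) as [Hpq _]. rewrite negK in Hpq.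
  exists q, r. repeat split; try apply mul_comm; assumption.
Qed.

End Superring.

Section Coherent.
Variables (T : Type) (A : SROps T) (S : T -> Prop).
Hypothesis HA : superring A.
Hypothesis HS : marshall_coherent A S.

Local Notation add := (sadd A).
Local Notation mul := (smul A).
Local Notation neg := (sneg A).
Local Notation z := (szero A).
Local Notation o := (sone A).
Local Notation sim := (msim A S).

Lemma S1 : S o.
Proof. apply HS. Qed.

Lemma S_mul a b x : S a -> S b -> mul a b x -> S x.
Proof. apply HS. Qed.

Lemma sim_mulSr a s x : S s -> mul a s x -> sim x a.
Proof.
  intros Hs Hx. destruct HS as [_ [_ H]].
  destruct (H x a s Hs Hx) as [P [Q HPQ]]. exists P, Q. exact HPQ.
Qed.

Lemma sim_mulSl s a x : S s -> mul s a x -> sim x a.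
Proof. intros Hs Hx. apply mul_comm in Hx; [| exact HA]. exact (sim_mulSr Hs Hx). Qed.

Lemma sim_refl a : sim a a.
Proof.
  exists (fun p => p = o), (fun p => p = o).
  repeat split; try (intros ? ->; apply S1); try (exists o; reflexivity); tauto.
Qed.

Lemma sim_sym a b : sim a b -> sim b a.
Proof.
  intros [X [Y [HX [HY [HX0 [HY0 E]]]]]].
  exists Y, X. repeat split; auto; apply E.
Qed.

Definition prod_set (P Q : T -> Prop) : T -> Prop :=
  fun r => exists p q, P p /\ Q q /\ mul p q r.

Lemma prod_set_S P Q : subset P S -> subset Q S -> subset (prod_set P Q) S.
Proof. intros HP HQ r [p [q [Hp [Hq Hr]]]]. exact (S_mul (HP p Hp) (HQ q Hq) Hr). Qed.

Lemma prod_set_nonempty P Q : nonempty P -> nonempty Q -> nonempty (prod_set P Q).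
Proof.
  intros [p Hp] [q Hq]. destruct (mul_total HA p q) as [r Hr].
  exists r, p, q. auto.
Qed.

Lemma mul_set_prod_trans a b c X Y Z W :
  set_eq (mul_set A a X) (mul_set A b Y) ->
  set_eq (mul_set A b Z) (mul_set A c W) ->
  subset (mul_set A a (prod_set X Z)) (mul_set A c (prod_set W Y)).
Proof.
  intros E1 E2 q [p [[x [w [Hx [Hw Hp]]]] Hq]].
  destruct (mul_assoc_rev HA Hp Hq) as [r [Hr Hq1]].
  destruct (proj1 (E1 r) (ex_intro _ x (conj Hx Hr))) as [y [Hy Hby]].
  destruct (mul_AC HA Hby Hq1) as [k [Hk Hq2]].
  destruct (proj1 (E2 k) (ex_intro _ w (conj Hw Hk))) as [v [Hv Hcv]].
  destruct (mul_assoc HA Hcv Hq2) as [n [Hn Hq3]].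
  exists n. split; [exists v, y |]; auto.
Qed.

Lemma sim_trans a b c : sim a b -> sim b c -> sim a c.
Proof.
  intros [X [Y [HX [HY [HX0 [HY0 E1]]]]]] [Z [W [HZ [HW [HZ0 [HW0 E2]]]]]].
  exists (prod_set X Z), (prod_set W Y).
  repeat split; auto using prod_set_S, prod_set_nonempty.
  - apply (mul_set_prod_trans E1 E2).
  - apply mul_set_prod_trans with (b := b); intro t; symmetry; auto.
Qed.

Lemma common_multiple_sim a b s t p :
  S s -> S t -> mul a s p -> mul b t p -> sim a b.
Proof.
  intros Hs Ht Ha Hb.
  exact (sim_trans (sim_sym (sim_mulSr Hs Ha)) (sim_mulSr Ht Hb)).
Qed.

Lemma sim_transfer a b :
  sim a b -> exists t, S t /\ forall p, mul b t p -> exists s, S s /\ mul a s p.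
Proof.
  intros [X [Y [HX [HY [_ [[t Ht] E]]]]]]. exists t. split; [auto |].
  intros p Hp. destruct (proj2 (E p) (ex_intro _ t (conj Ht Hp))) as [s [Hs Hp']].
  eauto.
Qed.

Lemma sim_neg a b : sim a b -> sim (neg a) (neg b).
Proof.
  assert (Hneg : forall a b X Y,
    subset (mul_set A a X) (mul_set A b Y) ->
    subset (mul_set A (neg a) X) (mul_set A (neg b) Y)).
  { intros a' b' X Y E q [p [Hp Hq]].
    apply (mul_negl HA) in Hq. destruct Hq as [w [Hw ->]].
    destruct (E w (ex_intro _ p (conj Hp Hw))) as [r [Hr Hw']].
    exists r. split; [exact Hr | apply (mul_negl HA); eauto]. }
  intros [X [Y [HX [HY [HX0 [HY0 E]]]]]]. exists X, Y.
  repeat split; auto; apply Hneg; intros q Hq; apply E; exact Hq.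
Qed.

Lemma sim_zero a : sim a z -> exists s, S s /\ forall x, mul a s x -> x = z.
Proof.
  intros [X [Y [HX [HY [[s Hs] [_ E]]]]]]. exists s. split; [auto |].
  intros x Hx. destruct (proj1 (E x) (ex_intro _ s (conj Hs Hx))) as [p [_ Hp]].
  apply (mul0l HA) in Hp. exact Hp.
Qed.

Definition sim_closure (r : T -> T -> T -> Prop) (a b c : T) : Prop :=
  exists c' a' b', sim c' c /\ sim a' a /\ sim b' b /\ r a' b' c'.

Local Notation madd := (sim_closure add).
Local Notation mmul := (sim_closure mul).

Lemma sim_closure_comm (r : T -> T -> T -> Prop) a b x :
  (forall a b x, r a b x -> r b a x) -> sim_closure r a b x -> sim_closure r b a x.
Proof.
  intros Hr [c' [a' [b' [Hc [Ha [Hb H]]]]]]. exists c', b', a'. auto.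
Qed.

Lemma madd_comm a b x : madd a b x -> madd b a x.
Proof. apply sim_closure_comm. intros ? ? ?. apply (add_comm HA). Qed.

Lemma mmul_comm a b x : mmul a b x -> mmul b a x.
Proof. apply sim_closure_comm. intros ? ? ?. apply (mul_comm HA). Qed.

Lemma madd_rev a b c : madd a b c -> madd c (neg b) a /\ madd (neg a) c b.
Proof.
  intros [c' [a' [b' [Hc [Ha [Hb H]]]]]]. destruct (add_rev HA H) as [H1 H2].
  split; [exists a', c', (neg b') | exists b', (neg a'), c'];
    repeat split; auto using sim_neg.
Qed.

Lemma madd0 a b : madd a z b <-> sim a b.
Proof.
  split.
  - intros [c' [a' [b' [Hc [Ha [Hb H]]]]]].
    destruct (sim_zero Hb) as [s [Hs Hb0]].
    destruct (mul_total HA a' s) as [p Hp].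
    destruct (add_mul_extend HA H Hp) as [q [r [Hq [Hr Hpq]]]].
    rewrite (Hb0 r Hr) in Hpq. apply (add0_iff HA) in Hpq. subst q.
    apply sim_trans with a'; [apply sim_sym, Ha |].
    exact (sim_trans (common_multiple_sim Hs Hs Hp Hq) Hc).
  - intro H. exists a, a, z. repeat split; auto using sim_refl.
    apply (add0_iff HA). reflexivity.
Qed.

Lemma madd_assoc a b c y x :
  madd a b y -> madd y c x -> exists w, madd b c w /\ madd a w x.
Proof.
  intros [y1 [a1 [b1 [Hy1 [Ha1 [Hb1 H1]]]]]] [x2 [y2 [c2 [Hx2 [Hy2 [Hc2 H2]]]]]].
  destruct (sim_transfer (sim_trans Hy1 (sim_sym Hy2))) as [t [Ht Htr]].
  destruct (mul_total HA y2 t) as [p Hp].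
  destruct (Htr p Hp) as [s [Hs Hp1]]. apply (mul_comm HA) in Hp1.
  destruct (add_mul_extend HA H2 Hp) as [q [r [Hq [Hr Hpqr]]]].
  destruct (mul_addr HA H1 Hp1) as [u [v [Hu [Hv Huv]]]].
  destruct (add_assoc HA Huv Hpqr) as [w [Hw Hq']].
  exists w. split.
  - exists w, v, r. repeat split; auto using sim_refl.
    + exact (sim_trans (sim_mulSl Hs Hv) Hb1).
    + exact (sim_trans (sim_mulSr Ht Hr) Hc2).
  - exists q, u, w. repeat split; auto using sim_refl.
    + exact (sim_trans (sim_mulSr Ht Hq) Hx2).
    + exact (sim_trans (sim_mulSl Hs Hu) Ha1).
Qed.

Lemma mmul_assoc a b c y x :
  mmul a b y -> mmul y c x -> exists w, mmul b c w /\ mmul a w x.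
Proof.
  intros [y1 [a1 [b1 [Hy1 [Ha1 [Hb1 H1]]]]]] [x2 [y2 [c2 [Hx2 [Hy2 [Hc2 H2]]]]]].
  destruct (sim_transfer (sim_trans Hy1 (sim_sym Hy2))) as [t [Ht Htr]].
  destruct (mul_total HA x2 t) as [q Hq].
  destruct (mul_AC HA H2 Hq) as [p [Hp Hq1]].
  destruct (Htr p Hp) as [s [Hs Hp1]].
  destruct (mul_assoc HA Hp1 Hq1) as [m [Hm Hq2]].
  destruct (mul_assoc HA H1 Hq2) as [n [Hn Hq3]].
  exists n. split.
  - exists n, b1, m. repeat split; auto using sim_refl.
    exact (sim_trans (sim_mulSl Hs Hm) Hc2).
  - exists q, a1, n. repeat split; auto using sim_refl.
    exact (sim_trans (sim_mulSr Ht Hq) Hx2).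
Qed.

Lemma mmul0 a x : mmul a z x <-> sim x z.
Proof.
  split.
  - intros [x' [a' [b' [Hx [Ha [Hb H]]]]]].
    destruct (sim_zero Hb) as [s [Hs Hb0]].
    destruct (mul_total HA x' s) as [w Hw].
    destruct (mul_assoc HA H Hw) as [m [Hm Hw']].
    rewrite (Hb0 m Hm) in Hw'. apply (mul0 HA) in Hw'. subst w.
    apply sim_trans with x'; [apply sim_sym, Hx |].
    exact (common_multiple_sim Hs S1 Hw (proj2 (mul0l HA o z) eq_refl)).
  - intro H. exists z, a, z.
    repeat split; [apply sim_sym, H | apply sim_refl | apply sim_refl |].
    apply (mul0 HA). reflexivity.
Qed.

Lemma mmul_addr a b c y x :
  madd a b y -> mmul c y x -> exists u v, mmul c a u /\ mmul c b v /\ madd u v x.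
Proof.
  intros [y1 [a1 [b1 [Hy1 [Ha1 [Hb1 H1]]]]]] [x2 [c2 [y2 [Hx2 [Hc2 [Hy2 H2]]]]]].
  destruct (sim_transfer (sim_trans Hy1 (sim_sym Hy2))) as [t [Ht Htr]].
  destruct (mul_total HA x2 t) as [q Hq].
  destruct (mul_assoc HA H2 Hq) as [p [Hp Hq1]].
  destruct (Htr p Hp) as [s [Hs Hp1]]. apply (mul_comm HA) in Hp1.
  destruct (mul_assoc_rev HA Hp1 Hq1) as [m [Hm Hq2]].
  destruct (mul_addr HA H1 Hq2) as [u [v [Hu [Hv Huv]]]].
  assert (Hmc : sim m c) by exact (sim_trans (sim_mulSr Hs Hm) Hc2).
  exists u, v. split; [| split].
  - exists u, m, a1. repeat split; auto using sim_refl.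
  - exists v, m, b1. repeat split; auto using sim_refl.
  - exists q, u, v. repeat split; auto using sim_refl.
    exact (sim_trans (sim_mulSr Ht Hq) Hx2).
Qed.

Lemma mmul_negl a b x : (exists y, mmul a b y /\ sim x (neg y)) <-> mmul (neg a) b x.
Proof.
  split.
  - intros [y [[y1 [a1 [b1 [Hy1 [Ha1 [Hb1 H1]]]]]] Hx]].
    exists (neg y1), (neg a1), b1. repeat split; auto using sim_neg.
    + exact (sim_trans (sim_neg Hy1) (sim_sym Hx)).
    + apply (mul_negl HA). eauto.
  - intros [x1 [a1 [b1 [Hx1 [Ha1 [Hb1 H1]]]]]].
    rewrite <- (negK HA a1) in H1. apply (mul_negl HA) in H1.
    destruct H1 as [w [Hw ->]].
    exists w. split; [| exact (sim_sym Hx1)].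
    exists w, (neg a1), b1. repeat split; auto using sim_refl.
    rewrite <- (negK HA a). exact (sim_neg Ha1).
Qed.

Lemma mmul_negr a b x : (exists y, mmul a b y /\ sim x (neg y)) <-> mmul a (neg b) x.
Proof.
  split.
  - intros [y [Hy Hx]]. apply mmul_comm, mmul_negl. exists y. auto using mmul_comm.
  - intro H. apply mmul_comm, mmul_negl in H. destruct H as [y [Hy Hx]].
    exists y. auto using mmul_comm.
Qed.

Lemma mmul_fix_left c a u :
  mmul c a u -> exists a0 u0, sim a0 a /\ sim u0 u /\ mul c a0 u0.
Proof.
  intros [u1 [c1 [a1 [Hu1 [Hc1 [Ha1 H1]]]]]].
  destruct (sim_transfer (sim_sym Hc1)) as [t [Ht Htr]].
  destruct (mul_total HA u1 t) as [w Hw].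
  destruct (mul_AC HA H1 Hw) as [k [Hk Hw1]].
  destruct (Htr k Hk) as [s [Hs Hk1]].
  destruct (mul_assoc HA Hk1 Hw1) as [a0 [Ha0 Hw2]].
  exists a0, w. split; [| split].
  - exact (sim_trans (sim_mulSl Hs Ha0) Ha1).
  - exact (sim_trans (sim_mulSr Ht Hw) Hu1).
  - exact Hw2.
Qed.

Lemma mul_rescale c a v s r :
  mul c a v -> S s -> mul v s r -> exists a', sim a' a /\ mul c a' r.
Proof.
  intros H Hs Hr. destruct (mul_assoc HA H Hr) as [a' [Ha' Hr']].
  exists a'. split; [exact (sim_mulSr Hs Ha') | exact Hr'].
Qed.

Lemma add_replace_summand u v x u1 :
  add u v x -> sim u u1 ->
  exists s t p q r, S s /\ S t /\ mul u1 s p /\ mul v t r /\ mul x t q /\ add p r q.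
Proof.
  intros H Hu. destruct (sim_transfer (sim_sym Hu)) as [t [Ht Htr]].
  destruct (mul_total HA u t) as [p Hp]. destruct (Htr p Hp) as [s [Hs Hp1]].
  destruct (add_mul_extend HA H Hp) as [q [r [Hq [Hr Hpqr]]]].
  exists s, t, p, q, r. repeat split; assumption.
Qed.

Lemma mmul_full
  (Hfull : forall a b c u v x,
     mul c a u -> mul c b v -> add u v x -> exists y, add a b y /\ mul c y x)
  a b c u v x :
  mmul c a u -> mmul c b v -> madd u v x -> exists y, madd a b y /\ mmul c y x.
Proof.
  intros Hu Hv [x3 [u3 [v3 [Hx3 [Hu3 [Hv3 H3]]]]]].
  destruct (mmul_fix_left Hu) as [a1 [u1 [Ha1 [Hu1 H1]]]].
  destruct (mmul_fix_left Hv) as [b2 [v2 [Hb2 [Hv2 H2]]]].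
  destruct (add_replace_summand H3 (sim_trans Hu3 (sim_sym Hu1)))
    as [s1 [t1 [p [q [r [Hs1 [Ht1 [Hp [Hr [Hq Hpqr]]]]]]]]]].
  destruct (mul_rescale H1 Hs1 Hp) as [a' [Ha' Hp1]].
  apply (add_comm HA) in Hpqr.
  assert (Hrv : sim r v2)
    by exact (sim_trans (sim_mulSr Ht1 Hr) (sim_trans Hv3 (sim_sym Hv2))).
  destruct (add_replace_summand Hpqr Hrv)
    as [s2 [t2 [r' [q' [p' [Hs2 [Ht2 [Hr' [Hp' [Hq' Hrpq]]]]]]]]]].
  destruct (mul_rescale H2 Hs2 Hr') as [b' [Hb' Hr1]].
  destruct (mul_rescale Hp1 Ht2 Hp') as [a'' [Ha'' Hp2]].
  apply (add_comm HA) in Hrpq.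
  destruct (Hfull _ _ _ _ _ _ Hp2 Hr1 Hrpq) as [y [Hy Hcy]].
  exists y. split.
  - exists y, a'', b'. repeat split; auto using sim_refl.
    + exact (sim_trans Ha'' (sim_trans Ha' Ha1)).
    + exact (sim_trans Hb' Hb2).
  - exists q', c, y. repeat split; auto using sim_refl.
    exact (sim_trans (sim_mulSr Ht2 Hq') (sim_trans (sim_mulSr Ht1 Hq) Hx3)).
Qed.

Section Domain.
Hypothesis Hz : ~ S z.
Hypothesis Hd : forall a b, mul a b z <-> a = z \/ b = z.

Lemma sim_zero_domain a : sim a z -> a = z.
Proof.
  intro H. destruct (sim_zero H) as [s [Hs Hs0]].
  destruct (mul_total HA a s) as [w Hw]. rewrite (Hs0 w Hw) in Hw.
  apply Hd in Hw. destruct Hw as [| ->]; [assumption | contradiction].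
Qed.

Lemma mmul_eq0_domain a b : mmul a b z <-> sim a z \/ sim b z.
Proof.
  split.
  - intros [c' [a' [b' [Hc [Ha [Hb H]]]]]].
    rewrite (sim_zero_domain Hc) in H. apply Hd in H.
    destruct H as [-> | ->]; [left | right]; apply sim_sym; assumption.
  - intros [H | H].
    + exists z, z, b. repeat split; auto using sim_refl, sim_sym.
      apply (mul0l HA). reflexivity.
    + exists z, a, z. repeat split; auto using sim_refl, sim_sym.
      apply (mul0 HA). reflexivity.
Qed.

End Domain.

End Coherent.

Section Quotient.
Variables (T : Type) (A : SROps T) (S : T -> Prop).
Hypothesis HA : superring A.
Hypothesis HS : marshall_coherent A S.

Local Notation z := (szero A).
Local Notation o := (sone A).
Local Notation sim := (msim A S).
Local Notation madd := (sim_closure A S (sadd A)).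
Local Notation mmul := (sim_closure A S (smul A)).
Local Notation Q := (mquot A S).
Local Notation cl := (mcl A S).

Lemma mclass_sim a b : mclass A S a = mclass A S b -> sim a b.
Proof.
  intro H. assert (Hb : mclass A S b b) by exact (sim_refl HS b).
  rewrite <- H in Hb. exact Hb.
Qed.

Lemma mcl_eq a b : cl a = cl b <-> sim a b.
Proof.
  split.
  - intro H. apply mclass_sim. exact (f_equal (@proj1_sig _ _) H).
  - intro H. apply subset_eq_compat. extensionality x.
    apply propositional_extensionality. unfold mclass. split; intro Hx.
    + exact (sim_trans HA HS (sim_sym H) Hx).
    + exact (sim_trans HA HS H Hx).
Qed.

Lemma mcl_surj (X : mquot_carrier A S) : exists a, X = cl a.
Proof. destruct X as [C [a Ha]]. exists a. apply subset_eq_compat. exact Ha. Qed.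

Ltac mcl_of X x := destruct (mcl_surj X) as [x ->].

Lemma mquot_rel_mcl (r : T -> T -> T -> Prop) a b c :
  (exists a0 b0 c0, mclass A S a = mclass A S a0 /\ mclass A S b = mclass A S b0 /\
     mclass A S c = mclass A S c0 /\ sim_closure A S r a0 b0 c0) <->
  sim_closure A S r a b c.
Proof.
  split.
  - intros [a0 [b0 [c0 [Ea [Eb [Ec [c' [a' [b' [Hc [Ha [Hb H]]]]]]]]]]]].
    apply mclass_sim in Ea, Eb, Ec.
    exists c', a', b'. repeat split; [| | | exact H];
      eapply sim_trans; eauto; apply sim_sym; assumption.
  - intro H. exists a, b, c. auto.
Qed.

Lemma mquot_add_mcl a b c : sadd Q (cl a) (cl b) (cl c) <-> madd a b c.
Proof. exact (mquot_rel_mcl (sadd A) a b c). Qed.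

Lemma mquot_mul_mcl a b c : smul Q (cl a) (cl b) (cl c) <-> mmul a b c.
Proof. exact (mquot_rel_mcl (smul A) a b c). Qed.

Lemma mquot_neg_mcl a : sneg Q (cl a) = cl (sneg A a).
Proof.
  change (cl (sneg A (mrep (cl a))) = cl (sneg A a)).
  apply mcl_eq, (sim_neg HA). unfold mrep.
  destruct (constructive_indefinite_description _ _) as [r Hr]; simpl.
  apply sim_sym, mclass_sim. exact Hr.
Qed.

Lemma mquot_mul_neg_mcl a b x :
  (exists Y, smul Q (cl a) (cl b) Y /\ cl x = sneg Q Y) <->
  exists y, mmul a b y /\ sim x (sneg A y).
Proof.
  split.
  - intros [Y [H1 H2]]. mcl_of Y y.
    rewrite mquot_neg_mcl, mcl_eq in H2. rewrite mquot_mul_mcl in H1. eauto.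
  - intros [y [H1 H2]]. exists (cl y).
    rewrite mquot_mul_mcl, mquot_neg_mcl, mcl_eq. auto.
Qed.

Lemma mquot_comm_multigroup : comm_multigroup Q.
Proof.
  split; [| split; [| split]].
  - intros X Y Z. mcl_of X a. mcl_of Y b. mcl_of Z c.
    rewrite !mquot_neg_mcl, !mquot_add_mcl. apply (madd_rev HA).
  - intros X Y. mcl_of X a. mcl_of Y b. change (szero Q) with (cl z).
    rewrite mquot_add_mcl, mcl_eq. apply (madd0 HA HS).
  - intros X Y Z W [V [H1 H2]]. mcl_of X a. mcl_of Y b. mcl_of Z c. mcl_of W x.
    mcl_of V y. rewrite mquot_add_mcl in H1, H2.
    destruct (madd_assoc HA HS H1 H2) as [w [Hw1 Hw2]].
    exists (cl w). rewrite !mquot_add_mcl. auto.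
  - intros X Y W. mcl_of X a. mcl_of Y b. mcl_of W x.
    rewrite !mquot_add_mcl. split; apply (madd_comm HA).
Qed.

Lemma mquot_comm_multimonoid : comm_multimonoid Q.
Proof.
  split; [| split].
  - intros X Y Z W [V [H1 H2]]. mcl_of X a. mcl_of Y b. mcl_of Z c. mcl_of W x.
    mcl_of V y. rewrite mquot_mul_mcl in H1, H2.
    destruct (mmul_assoc HA HS H1 H2) as [w [Hw1 Hw2]].
    exists (cl w). rewrite !mquot_mul_mcl. auto.
  - intros X Y W. mcl_of X a. mcl_of Y b. mcl_of W x.
    rewrite !mquot_mul_mcl. split; apply (mmul_comm HA).
  - intro X. mcl_of X a. change (sone Q) with (cl o). rewrite mquot_mul_mcl.
    exists a, o, a. repeat split; try apply (sim_refl HS). apply (mul1 HA).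
Qed.

Lemma mquot_mul_addr (X Y Z W : mquot_carrier A S) :
  (exists V, sadd Q X Y V /\ smul Q Z V W) ->
  exists U V, smul Q Z X U /\ smul Q Z Y V /\ sadd Q U V W.
Proof.
  intros [V [H1 H2]]. mcl_of X a. mcl_of Y b. mcl_of Z c. mcl_of W x. mcl_of V y.
  rewrite mquot_add_mcl in H1. rewrite mquot_mul_mcl in H2.
  destruct (mmul_addr HA HS H1 H2) as [u [v [Hu [Hv Huv]]]].
  exists (cl u), (cl v). rewrite !mquot_mul_mcl, mquot_add_mcl. auto.
Qed.

Lemma mquot_superring : superring Q.
Proof.
  split; [exact mquot_comm_multigroup |].
  split; [exact mquot_comm_multimonoid |].
  split; [| split; [exact mquot_mul_addr | split]].
  - intros X W. mcl_of X a. mcl_of W x. change (szero Q) with (cl z).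
    rewrite mquot_mul_mcl, mcl_eq. apply (mmul0 HA HS).
  - intros X Y W. mcl_of X a. mcl_of Y b. mcl_of W x.
    rewrite mquot_mul_neg_mcl, mquot_neg_mcl, mquot_mul_mcl. apply (mmul_negl HA HS).
  - intros X Y W. mcl_of X a. mcl_of Y b. mcl_of W x.
    rewrite mquot_mul_neg_mcl, mquot_neg_mcl, mquot_mul_mcl. apply (mmul_negr HA HS).
Qed.

Lemma mquot_full : full_superring A -> full_superring Q.
Proof.
  intros [_ Hf]. split; [exact mquot_superring |].
  intros X Y Z W. split; [apply mquot_mul_addr |].
  intros [U [V [H1 [H2 H3]]]]. mcl_of X a. mcl_of Y b. mcl_of Z c. mcl_of W x.
  mcl_of U u. mcl_of V v. rewrite mquot_mul_mcl in H1, H2. rewrite mquot_add_mcl in H3.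
  assert (Hfull : forall a b c u v x, smul A c a u -> smul A c b v -> sadd A u v x ->
            exists y, sadd A a b y /\ smul A c y x)
    by (intros; apply Hf; eauto).
  destruct (mmul_full HA HS Hfull H1 H2 H3) as [y [Hy1 Hy2]].
  exists (cl y). rewrite mquot_add_mcl, mquot_mul_mcl. auto.
Qed.

Lemma mquot_domain : ~ S z -> superdomain A -> superdomain Q.
Proof.
  intros Hz [_ [Hzo Hd]]. split; [exact mquot_superring | split].
  - change (cl z <> cl o). rewrite mcl_eq. intro H. apply Hzo.
    symmetry. exact (sim_zero_domain HA Hz Hd (sim_sym H)).
  - intros X Y. mcl_of X a. mcl_of Y b. change (szero Q) with (cl z).
    rewrite mquot_mul_mcl, !mcl_eq. exact (mmul_eq0_domain HA HS Hz Hd a b).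
Qed.

Lemma mquot_field : ~ S z -> superfield A -> superfield Q.
Proof.
  intros Hz [Hd Hinv]. split; [exact (mquot_domain Hz Hd) |].
  intros X HX. mcl_of X a.
  assert (Ha : a <> z) by (intros ->; apply HX; reflexivity).
  destruct (Hinv a Ha) as [b Hb]. exists (cl b). change (sone Q) with (cl o).
  rewrite mquot_mul_mcl. exists o, a, b. repeat split; try apply (sim_refl HS). exact Hb.
Qed.

End Quotient.

Theorem corollary4p6 (T : Type) (A : SROps T) (S : T -> Prop) :
  superring A -> marshall_coherent A S -> ~ S (szero A) ->
  (full_superring A -> full_superring (mquot A S)) /\
  (superdomain A -> superdomain (mquot A S)) /\
  (superfield A -> superfield (mquot A S)).
Proof.
  intros HA HS Hz. split; [| split].
  - exact (mquot_full HA HS).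
  - exact (mquot_domain HA HS Hz).
  - exact (mquot_field HA HS Hz).
Qed.
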